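(* Let $n\ge2$, $\psi\in\mathrm{Aut}(F_n)$, and let $X\to R_n$ be a finite regular cover corresponding to a characteristic finite-index subgroup $K=\pi_1(X)\le F_n$, with deck group $\Gamma=F_n/K$. Then the automorphism of $\Gamma$ induced by $\psi$ is the identity if and only if the automorphism of $H_1(X,\mathbb{Z})$ induced by $\psi$ is $\Gamma$-equivariant, i.e. $\psi(w\cdot d)=w\cdot\psi(d)$ for all $w\in F_n$ (equivalently all $w\in\Gamma$) and $d\in H_1(X,\mathbb{Z})$.
   Context: $F_n$ is the free group of rank $n\ge2$, identified with $\pi_1(R_n,* )$, $R_n$ the wedge of $n$ circles. $K$ characteristic means $\psi(K)=K$ for all $\psi\in\mathrm{Aut}(F_n)$. $H_1(X,\mathbb{Z})\cong K^{ab}=K/[K,K]$; the action $w\cdot d$ of $w\in F_n$ on $d\in K^{ab}$ is induced by conjugation $\gamma\mapsto w\gamma w^{-1}$ on $K$ and factors through $\Gamma$. The automorphism of $H_1(X,\mathbb{Z})$ induced by $\psi$ is the abelianization of $\psi|_K$. *)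

(* The free group F_n is built concretely as the set of
   freely reduced words over the alphabet 'I_n x bool
   (a letter (i, true) is the generator x_i, (i, false) is x_i^-1). *)
From Stdlib Require List.
From mathcomp Require Import all_boot.
Set Implicit Arguments. Unset Strict Implicit. Unset Printing Implicit Defensive.

Section FreeGroup.
Variable n : nat.

Definition letter := ('I_n * bool)%type.
Definition linv (x : letter) : letter := (x.1, ~~ x.2).

Definition nocancel (y z : letter) : bool := z != linv y.
Definition reduced (w : seq letter) : bool := sorted nocancel w.

Definition push (x : letter) (w : seq letter) : seq letter :=
  if w is y :: w' then (if y == linv x then w' else x :: w) else [:: x].
Definition reduce (w : seq letter) : seq letter := foldr push [::] w.

Lemma push_reduced x w : reduced w -> reduced (push x w).
Proof.
case: w => [|y w] //= Hw.
case: ifP => Hy; first exact: (path_sorted Hw).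
by rewrite /reduced /= /nocancel Hy Hw.
Qed.

Lemma reduce_reduced w : reduced (reduce w).
Proof. by elim: w => [|x w IH] //=; apply: push_reduced. Qed.

Definition Fn := {w : seq letter | reduced w}.

Definition Fn_of (w : seq letter) : Fn := exist _ (reduce w) (reduce_reduced w).

Definition fgone : Fn := Fn_of [::].
Definition fgmul (a b : Fn) : Fn := Fn_of (proj1_sig a ++ proj1_sig b).
Definition fginv (a : Fn) : Fn := Fn_of (map linv (rev (proj1_sig a))).
Definition fconj (w d : Fn) : Fn := fgmul (fgmul w d) (fginv w).
Definition fcomm (a b : Fn) : Fn := fgmul (fgmul a b) (fgmul (fginv a) (fginv b)).

Definition is_hom (f : Fn -> Fn) : Prop :=
  forall a b, f (fgmul a b) = fgmul (f a) (f b).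
Definition is_aut (f : Fn -> Fn) : Prop := is_hom f /\ bijective f.

Definition is_subgroup (K : Fn -> Prop) : Prop :=
  [/\ K fgone, (forall a b, K a -> K b -> K (fgmul a b)) &
      (forall a, K a -> K (fginv a))].

Definition characteristic (K : Fn -> Prop) : Prop :=
  forall psi, is_aut psi -> forall x, K (psi x) <-> K x.

Definition finite_index (K : Fn -> Prop) : Prop :=
  exists reps : seq Fn, forall w, exists2 r, List.In r reps & K (fgmul (fginv r) w).

Inductive gen (S : Fn -> Prop) : Fn -> Prop :=
  | gen_one : gen S fgone
  | gen_mul : forall x y, S x -> gen S y -> gen S (fgmul x y)
  | gen_invmul : forall x y, S x -> gen S y -> gen S (fgmul (fginv x) y).

Definition derived (K : Fn -> Prop) : Fn -> Prop :=
  gen (fun c => exists a b, [/\ K a, K b & c = fcomm a b]).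

End FreeGroup.

(* One direction is a commutator identity: if psi(w) = w k with k in K, then
   psi(w d w^-1)^-1 (w psi(d) w^-1) is the commutator of w k w^-1 and
   w psi(d)^-1 w^-1, both in K.
   For the converse, equivariance says that c = w^-1 psi(w) acts trivially on
   the edge coordinates of H_1(X): for every generator x_i and every loop D in
   K, the lift of D started at cK crosses the x_i-edge leaving the base vertex
   K as often (with sign) as the lift started at K. As K has finite index,
   some positive power of x_i lies in K, and its lift started at K crosses
   that edge; hence the x_i-cycle through cK also passes through K. Let x_0^s
   be the first return to K along the x_0-cycle from cK and come back along
   the x_1-cycle (this needs n >= 2): the resulting loop crosses the x_0-edge
   at K when started at K but not when started at cK, unless s = 0, that is,
   unless c is in K. *)

From HB Require Import structures.
From mathcomp Require Import all_boot boolp.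
From Stdlib Require Import ZArith Lia.
Set Implicit Arguments. Unset Strict Implicit. Unset Printing Implicit Defensive.

Local Open Scope group_scope.

Lemma In_mem (T : eqType) (x : T) s : List.In x s -> x \in s.
Proof. by elim: s => //= y s IH [->|/IH]; rewrite inE ?eqxx // => ->; rewrite orbT. Qed.

Section FreeGroupLaws.
Variable n : nat.
Implicit Types (a b c : Fn n) (x : letter n) (u v w : seq (letter n)).

Lemma linvK : involutive (@linv n).
Proof. by case=> i b; rewrite /linv negbK. Qed.

Lemma push_linvK x w : reduced w -> push x (push (linv x) w) = w.
Proof.
case: w => [|y w] /=; first by rewrite eqxx.
case: ifP => [/eqP-> | _ _] /=; last by rewrite eqxx.
rewrite linvK; case: w => [|z w] //= /andP[].
by rewrite /nocancel => /negbTE->.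
Qed.

Definition rmul u v := foldr (@push n) v u.

Lemma rmul_reduced u v : reduced v -> reduced (rmul u v).
Proof. by elim: u => //= x u IH /IH; apply: push_reduced. Qed.

Lemma rmul_push x u v : reduced u -> reduced v ->
  rmul (push x u) v = push x (rmul u v).
Proof.
case: u => [|y u] //= Hu Hv; case: ifP => // /eqP->.
by rewrite push_linvK // rmul_reduced // (path_sorted Hu).
Qed.

Lemma rmulA u v w : reduced v -> reduced w ->
  rmul (rmul u v) w = rmul u (rmul v w).
Proof.
by move=> Hv Hw; elim: u => //= x u <-; rewrite rmul_push ?rmul_reduced.
Qed.

Lemma reduce_id w : reduced w -> reduce w = w.
Proof.
elim: w => //= x w IH Hw; rewrite IH; last exact: path_sorted Hw.
by case: w Hw {IH} => //= y w /andP[/negbTE->].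
Qed.

Lemma val_fgmul a b : val (fgmul a b) = rmul (val a) (val b).
Proof. by rewrite /= /reduce foldr_cat -/(reduce _) reduce_id ?(valP b). Qed.

Lemma rmul_reduce u v : reduced v -> rmul (reduce u) v = rmul u v.
Proof. exact: rmulA. Qed.

Lemma rmul_linv u w : reduced w -> rmul (map (@linv n) (rev u)) (rmul u w) = w.
Proof.
elim: u w => //= x u IH w Hw.
rewrite rev_cons map_rcons -cats1 /rmul foldr_cat /=.
have := push_linvK (linv x); rewrite linvK => ->; last exact: rmul_reduced.
exact: IH.
Qed.

Lemma fgmulA : associative (@fgmul n).
Proof.
by move=> a b c; apply: val_inj; rewrite !val_fgmul rmulA ?(valP b) ?(valP c).
Qed.

Lemma fgmul1 : left_id (fgone n) (@fgmul n).
Proof. by move=> a; apply: val_inj; rewrite val_fgmul. Qed.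

Lemma fgmulg1 : right_id (fgone n) (@fgmul n).
Proof. by move=> a; apply: val_inj; rewrite val_fgmul; apply: reduce_id (valP a). Qed.

Lemma rmul_inv_nil u : rmul (map (@linv n) (rev u)) (reduce u) = [::].
Proof. exact: rmul_linv. Qed.

Lemma fgmulVg : left_inverse (fgone n) (@fginv n) (@fgmul n).
Proof.
move=> a; apply: val_inj; rewrite val_fgmul /= rmul_reduce ?(valP a) //.
by rewrite -{2}(reduce_id (valP a)) rmul_inv_nil.
Qed.

Lemma fgmulgV : right_inverse (fgone n) (@fginv n) (@fgmul n).
Proof.
move=> a; apply: val_inj; rewrite val_fgmul.
by have := rmul_inv_nil (map (@linv n) (rev (val a))); rewrite -map_rev revK (mapK linvK).
Qed.

End FreeGroupLaws.

HB.instance Definition _ n := [Choice of Fn n by <:].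
HB.instance Definition _ n :=
  isGroup.Build (Fn n) (@fgmulA n) (@fgmul1 n) (@fgmulg1 n) (@fgmulVg n) (@fgmulgV n).

Lemma fgmulE n : @fgmul n = mul. Proof. by []. Qed.
Lemma fginvE n : @fginv n = inv. Proof. by []. Qed.

Section Letters.
Variable n : nat.
Implicit Types (a : Fn n) (l : letter n).

Definition of_letter l : Fn n := Fn_of [:: l].
Definition xgen (i : 'I_n) : Fn n := of_letter (i, true).

Lemma of_letter_linv l : of_letter l * of_letter (linv l) = 1.
Proof. by apply: val_inj; rewrite val_fgmul /= eqxx. Qed.

Lemma of_letter_Fn_of l u : of_letter l * Fn_of u = Fn_of (l :: u).
Proof. by apply: val_inj; rewrite val_fgmul. Qed.

Lemma Fn_of_val a : Fn_of (val a) = a.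
Proof. by apply: val_inj; rewrite /= reduce_id ?(valP a). Qed.

End Letters.

Section Automorphisms.
Variable n : nat.
Implicit Types (f : Fn n -> Fn n) (a b g : Fn n).

Lemma hom_mul f a b : is_hom f -> f (a * b) = f a * f b.
Proof. exact. Qed.

Lemma hom1 f : is_hom f -> f 1 = 1.
Proof. by move=> fM; apply: (@mulgI _ (f 1)); rewrite -hom_mul // !mulg1. Qed.

Lemma homV f a : is_hom f -> f a^-1 = (f a)^-1.
Proof. by move=> fM; apply/esym/mulg1_eq; rewrite -hom_mul // mulgV hom1. Qed.

Lemma conj_aut g : is_aut (fun a => g * a * g^-1).
Proof.
split; first by move=> a b /=; rewrite fgmulE !mulgA mulgVK.
by exists (fun a => g^-1 * a * g) => a; rewrite !mulgA ?mulVg ?mulgV mul1g ?mulgK ?mulgVK.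
Qed.

End Automorphisms.

Section CharacteristicSubgroup.
Variables (n : nat) (K : Fn n -> Prop).
Hypotheses (subK : is_subgroup K) (charK : characteristic K).
Implicit Types (a b c g k : Fn n).

Lemma sub1 : K 1. Proof. by case: subK. Qed.
Lemma subM a b : K a -> K b -> K (a * b). Proof. by case: subK => _ + _; apply. Qed.
Lemma subV a : K a -> K a^-1. Proof. by case: subK => _ _; apply. Qed.

Lemma subMl k a : K k -> K (k * a) <-> K a.
Proof.
move=> Kk; split=> [Kka|]; last exact: subM.
by rewrite -(mulKg k a); apply: subM (subV Kk) Kka.
Qed.

Lemma fcomm_sub a b : K a -> K b -> K (fcomm a b).
Proof. by move=> Ka Kb; do !apply: subM => //; apply: subV. Qed.

Lemma sub_conj g a : K (g * a * g^-1) <-> K a.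
Proof. exact: charK (conj_aut g) a. Qed.

Lemma derived_fcomm a b : K a -> K b -> derived K (fcomm a b).
Proof.
move=> Ka Kb; rewrite -[fcomm a b]mulg1.
by apply: gen_mul; [exists a, b | exact: gen_one].
Qed.

Lemma equivariant_of_trivial_on_quotient psi : is_aut psi ->
  (forall w, K (w^-1 * psi w)) ->
  forall w d, K d -> derived K ((psi (w * d * w^-1))^-1 * (w * psi d * w^-1)).
Proof.
move=> [psiM psi_bij] psi_triv w d Kd.
rewrite !(hom_mul _ _ psiM) (homV _ psiM).
have -> : psi w = w * (w^-1 * psi w) by rewrite mulVKg.
have KD : K (psi d) by apply/(charK (conj psiM psi_bij)).
move: (w^-1 * psi w) (psi_triv w) (psi d) KD => k Kk D KD.
have -> : (w * k * D * (w * k)^-1)^-1 * (w * D * w^-1) =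
          fcomm (w * k * w^-1) (w * D^-1 * w^-1).
  by rewrite /fcomm !fgmulE !fginvE !invgM !invgK !mulgA !mulgVK.
by apply: derived_fcomm; apply/sub_conj => //; apply: subV.
Qed.

Section EdgeFlow.
Variable i : 'I_n.
Implicit Types (d : Fn n) (l : letter n) (u v w : seq (letter n)).
Local Open Scope Z_scope.
(* reopened so that [*] still denotes the group product *)
Local Open Scope group_scope.

(* [flow i c a] is the signed number of times the lift of the path [a],
   started at the vertex [cK] of the cover, crosses the edge labelled [x_i]
   leaving the base vertex [K]; a letter [x_i^-1] read at [c] crosses the
   edge leaving [c x_i^-1] backwards. On loops [D] in [K] this is a
   coordinate of [D] in H_1(X). *)
Definition edge_step c l : Z :=
  if l == (i, true) then Z.b2z `[< K c >]
  else if l == (i, false) then - Z.b2z `[< K (c * of_letter l) >]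
  else 0.

Fixpoint word_flow c w : Z :=
  if w is l :: w' then edge_step c l + word_flow (c * of_letter l) w' else 0.

Definition flow c a := word_flow c (val a).

Lemma edge_step_linv c l : edge_step c l + edge_step (c * of_letter l) (linv l) = 0.
Proof.
rewrite /edge_step -mulgA of_letter_linv mulg1.
case: l => j [] /=; rewrite /linv /= !xpair_eqE /=;
  case: eqVneq => //= _; lia.
Qed.

Lemma word_flow_push c l w : word_flow c (push l w) = word_flow c (l :: w).
Proof.
case: w => [|l' w] //=; case: ifP => // /eqP->.
by rewrite -mulgA of_letter_linv mulg1; have := edge_step_linv c l; lia.
Qed.

Lemma word_flow_rmul c u v : word_flow c (rmul u v) = word_flow c (u ++ v).
Proof. by elim: u c => //= l u IH c; rewrite word_flow_push /= IH. Qed.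

Lemma word_flow_cat c u v :
  word_flow c (u ++ v) = word_flow c u + word_flow (c * Fn_of u) v.
Proof.
elim: u c => [|l u IH] c /=; first by rewrite mulg1.
by rewrite IH -mulgA of_letter_Fn_of Z.add_assoc.
Qed.

Lemma flow_mul c a b : flow c (a * b) = flow c a + flow (c * a) b.
Proof. by rewrite /flow val_fgmul word_flow_rmul word_flow_cat Fn_of_val. Qed.

Lemma flow1 c : flow c 1 = 0.
Proof. by []. Qed.

Lemma flowV c a : flow c a^-1 = - flow (c * a^-1) a.
Proof. by have := flow_mul c a^-1 a; rewrite mulVg flow1; lia. Qed.

Lemma sub_coset c c' a : K (c' * c^-1) -> K (c * a) = K (c' * a).
Proof.
move=> Kcc'; have -> : c' * a = (c' / c) * (c * a) by rewrite mulgA mulgVK.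
by rewrite (propext (subMl _ Kcc')).
Qed.

Lemma flow_coset c c' a : K (c' * c^-1) -> flow c a = flow c' a.
Proof.
rewrite /flow; elim: (val a) c c' => //= l w IH c c' Kcc'.
rewrite (IH _ (c' * of_letter l)); last by rewrite invgM !mulgA mulgK.
have Kc : K c = K c' by rewrite -[c]mulg1 -[c']mulg1; apply: sub_coset.
by rewrite /edge_step Kc (sub_coset _ Kcc').
Qed.

Lemma flow_subM c a b : K a -> flow c (a * b) = flow c a + flow c b.
Proof.
move=> Ka; rewrite flow_mul (@flow_coset (c * a) c) // invgM mulgA.
by apply/sub_conj/subV.
Qed.

Lemma flow_subV c a : K a -> flow c a^-1 = - flow c a.
Proof. by move=> Ka; have := flow_subM c a (subV Ka); rewrite mulVg flow1; lia. Qed.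

Lemma flow_fcomm c a b : K a -> K b -> flow c (fcomm a b) = 0.
Proof.
move=> Ka Kb; rewrite /fcomm !fgmulE !fginvE.
by rewrite !flow_subM ?flow_subV //; [lia | exact: subV | exact: subM].
Qed.

Lemma flow_derived c e : derived K e -> flow c e = 0.
Proof.
have gen_sub x : (exists a b, [/\ K a, K b & x = fcomm a b]) -> K x /\ flow c x = 0.
  by case=> a [b [Ka Kb ->]]; split; [exact: fcomm_sub | exact: flow_fcomm].
elim=> // x y /gen_sub[Kx fx] _ IH.
  by rewrite fgmulE flow_subM // fx IH.
by rewrite fgmulE fginvE flow_subM ?flow_subV ?fx ?IH //; exact: subV.
Qed.

Lemma flow_conj c g d : K d -> flow c (g * d * g^-1) = flow (c * g) d.
Proof.
move=> Kd; rewrite !flow_mul (@flow_coset (c * (g * d)) (c * g)).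
  by have := flow_mul c g g^-1; rewrite mulgV flow1; lia.
have -> : c * g / (c * (g * d)) = c * g * d^-1 * (c * g)^-1 by rewrite !invgM !mulgA.
exact/sub_conj/subV.
Qed.

Lemma flow_of_letter c l : flow c (of_letter l) = edge_step c l.
Proof. by rewrite /flow /= Z.add_0_r. Qed.

Lemma flow_xgen_pow c m :
  flow c (xgen i ^+ m) = Z.of_nat (\sum_(j < m) `[< K (c * xgen i ^+ j)%g >]).
Proof.
elim: m c => [|m IH] c; first by rewrite big_ord0.
rewrite expgS flow_mul IH flow_of_letter big_ord_recl expg0 mulg1 Nat2Z.inj_add.
rewrite /edge_step eqxx; congr (_ + _); first by case: `[< _ >].
by congr (Z.of_nat _); apply: eq_bigr => j _; rewrite expgS mulgA.
Qed.

Lemma flow_xgen_pow_other c j m : j != i -> flow c (xgen j ^+ m) = 0.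
Proof.
move=> ji; elim: m c => // m IH c.
by rewrite expgS flow_mul IH flow_of_letter /edge_step !xpair_eqE (negbTE ji).
Qed.

Lemma flow_xgen_pow_eq0 c m :
  (forall j, (j < m)%nat -> ~ K (c * xgen i ^+ j)) -> flow c (xgen i ^+ m) = 0.
Proof.
move=> notK; rewrite flow_xgen_pow big1 // => j _.
by rewrite asboolF //; apply: notK (ltn_ord j).
Qed.

Lemma flow1_xgen_pow_gt0 m : (0 < m)%nat -> 0 < flow 1 (xgen i ^+ m).
Proof.
case: m => // m _; rewrite flow_xgen_pow big_ord_recl expg0 mulg1 asboolT //.
exact: sub1.
Qed.

End EdgeFlow.

Lemma pow_div_sub_eq g j1 j2 : (forall m, 0 < m -> ~ K (g ^+ m)) ->
  K (g ^+ j2 / g ^+ j1) -> j1 = j2.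
Proof.
move=> no_pow; wlog le12 : j1 j2 / j1 <= j2 => [hwlog|].
  case/orP: (leq_total j1 j2) => [/hwlog//|/hwlog le21 /subV].
  by rewrite invgF => /le21.
rewrite -expgnFr // => Kg; apply/eqP; rewrite eqn_leq le12 /=.
by apply: contraT; rewrite -ltnNge -subn_gt0 => /no_pow.
Qed.

Lemma finite_index_pow : finite_index K -> forall g, exists2 m, 0 < m & K (g ^+ m).
Proof.
case=> reps cover g; have [//|no_pow] := pselect (exists2 m, 0 < m & K (g ^+ m)).
have {}no_pow m : 0 < m -> ~ K (g ^+ m) by move=> m_gt0 Km; apply: no_pow; exists m.
have rep j : {r | r \in reps & K (r^-1 * g ^+ j)}.
  by apply: cid2; have [r /In_mem] := cover (g ^+ j); exists r.
have rep_mem j : s2val (rep j) \in reps := s2valP (rep j).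
have rep_idx j : index (s2val (rep j)) reps < size reps by rewrite index_mem.
pose f (j : 'I_(size reps).+1) : 'I_(size reps) := Ordinal (rep_idx j).
have f_inj : injective f.
  move=> j1 j2 /(congr1 (nth 1 reps \o val)) /=; rewrite !nth_index //.
  case: (rep j1) (rep j2) => [r1 _ K1] [r2 _ K2] /= Er; subst r2.
  apply/val_inj/(pow_div_sub_eq no_pow)/(sub_conj r1^-1).
  rewrite invgK (_ : _ * r1 = (r1^-1 * g ^+ j2) / (r1^-1 * g ^+ j1)).
    exact: subM K2 (subV K1).
  by rewrite invgM invgK !mulgA.
by have := leq_card f f_inj; rewrite !card_ord ltnn.
Qed.

Lemma flow_invariant_sub : 1 < n -> finite_index K -> forall c,
  (forall i D, K D -> flow i c D = flow i 1 D) -> K c.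
Proof.
move=> n_gt1 fin c same.
have reach i : exists j, `[< K (c * xgen i ^+ j) >].
  have [m m_gt0 Km] := finite_index_pow fin (xgen i).
  apply: contrapT => none; have := flow1_xgen_pow_gt0 i m_gt0.
  rewrite -same // flow_xgen_pow_eq0 // => j _ Kj.
  by apply: none; exists j; apply/asboolP.
pose i0 : 'I_n := Ordinal (ltnW n_gt1); pose i1 : 'I_n := Ordinal n_gt1.
have [[|s] /asboolP Ks s_min] := ex_minnP (reach i0); first by rewrite mulg1 in Ks.
have [b /asboolP Kb] := reach i1.
have KD : K (xgen i0 ^+ s.+1 / xgen i1 ^+ b).
  apply/(sub_conj c); rewrite (_ : _ * c^-1 = (c * xgen i0 ^+ s.+1) / (c * xgen i1 ^+ b)).
    exact: subM Ks (subV Kb).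
  by rewrite invgM !mulgA.
have := same i0 _ KD; rewrite !flow_mul !flowV !(@flow_xgen_pow_other i0 _ i1) //.
rewrite flow_xgen_pow_eq0 => [|j j_lt Kj]; last first.
  by have := s_min j (asboolT Kj); rewrite leqNgt j_lt.
by have := flow1_xgen_pow_gt0 i0 (ltn0Sn s); lia.
Qed.

Lemma trivial_on_quotient_of_equivariant psi : 1 < n -> finite_index K ->
  is_aut psi ->
  (forall w d, K d -> derived K ((psi (w * d * w^-1))^-1 * (w * psi d * w^-1))) ->
  forall w, K (w^-1 * psi w).
Proof.
move=> n_gt1 fin [psiM [phi psiK phiK]] equiv w.
apply: flow_invariant_sub => // i D KD.
have Kd : K (phi D) by apply/(charK (conj psiM (Bijective psiK phiK))); rewrite phiK.
have := flow_derived i w^-1 (equiv w _ Kd).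
rewrite !(hom_mul _ _ psiM) (homV _ psiM) phiK flow_subM; last exact/subV/sub_conj.
by rewrite flow_subV ?sub_conj // !flow_conj // mulVg => /Z.add_move_0_r/Z.opp_inj.
Qed.

End CharacteristicSubgroup.

Theorem lemma3p2 (n : nat) (hn : 2 <= n) (K : Fn n -> Prop) (psi : Fn n -> Fn n) :
  is_subgroup K -> characteristic K -> finite_index K -> is_aut psi ->
  ((* psi induces the identity on Gamma = F_n / K : psi(w) K = w K *)
   (forall w : Fn n, K (fgmul (fginv w) (psi w))) <->
   (* the induced map on K^ab = K/[K,K] is Gamma-equivariant:
      [psi(w d w^-1)] = [w psi(d) w^-1] in K/[K,K] *)
   (forall w d : Fn n, K d ->
      derived K (fgmul (fginv (psi (fconj w d))) (fconj w (psi d))))).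
Proof.
move=> subK charK fin psi_aut; split.
  exact: equivariant_of_trivial_on_quotient.
exact: trivial_on_quotient_of_equivariant.
Qed.
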